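(* Let $P,Q$ be $n\times n$ matrices with all entries in $(0,1)$, stochastic by columns (i.e. $\sum_{i=1}^nP(i,j)=\sum_{i=1}^nQ(i,j)=1$ for each $j$), and suppose that for some $\epsilon>0$, $e^{-\epsilon}\le P(i,j)/Q(i,j)\le e^{\epsilon}$ for all $i,j$. Then the maximal eigenvalue of both $P$ and $Q$ is $1$, and their associated positive right eigenvectors $u,v$ satisfy \[ d_p(u,v)\le\frac{2\epsilon}{1-\min(\tau_P,\tau_Q)}, \] where $\tau_P,\tau_Q$ are the Birkhoff contraction coefficients of $P$ and $Q$.
   Context: For $\pmb{x},\pmb{y}\in(0,\infty)^n$, the projective pseudo-distance is $d_p(\pmb{x},\pmb{y})=\max_i\log(x_i/y_i)-\min_i\log(x_i/y_i)$. For a primitive matrix $M$ (nonnegative with some power strictly positive) with primitivity index $\ell$ (the least $\ell$ with $M^\ell>0$), the Birkhoff contraction coefficient is $\tau_M=\dfrac{1-\sqrt{\theta}}{1+\sqrt{\theta}}$ with $\theta=\min_{i,j,k,l}\dfrac{M^\ell(i,j)M^\ell(k,l)}{M^\ell(i,l)M^\ell(k,j)}$. For a positive matrix, $\ell=1$. *)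

From HB Require Import structures.
From mathcomp Require Import all_boot all_order all_algebra.
From mathcomp Require Import complex.
From mathcomp Require Import reals sequences exp.
Set Implicit Arguments. Unset Strict Implicit. Unset Printing Implicit Defensive.
Import Order.TTheory GRing.Theory Num.Theory.
Local Open Scope ring_scope.

(* Matrices are indexed by 'I_n.+1 (size n+1 >= 1). *)

Definition dproj {R : realType} {n : nat} (x y : 'cV[R]_n.+1) : R :=
  \big[Num.max/ln (x ord0 0 / y ord0 0)]_(i < n.+1) ln (x i 0 / y i 0)
  - \big[Num.min/ln (x ord0 0 / y ord0 0)]_(i < n.+1) ln (x i 0 / y i 0).

(* theta = min_{i,j,k,l} M(i,j) M(k,l) / (M(i,l) M(k,j)) for a positive
   matrix M (primitivity index 1).  The seed value 1 is the term i=k, j=l,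
   so it does not change the minimum. *)
Definition birkhoff_theta {R : realType} {n : nat} (M : 'M[R]_n.+1) : R :=
  \big[Num.min/1]_(i < n.+1) \big[Num.min/1]_(j < n.+1)
   \big[Num.min/1]_(k < n.+1) \big[Num.min/1]_(l < n.+1)
     (M i j * M k l / (M i l * M k j)).

Definition birkhoff_tau {R : realType} {n : nat} (M : 'M[R]_n.+1) : R :=
  (1 - Num.sqrt (birkhoff_theta M)) / (1 + Num.sqrt (birkhoff_theta M)).

Definition positive_vec {R : realType} {n : nat} (x : 'cV[R]_n.+1) : Prop :=
  forall i, 0 < x i 0.

Definition cmx {R : realType} {n : nat} (M : 'M[R]_n.+1) : 'M[R[i]]_n.+1 :=
  map_mx (fun a : R => Complex a 0) M.

(* "The maximal eigenvalue of M is 1": 1 is an eigenvalue and every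
   (complex) eigenvalue has modulus at most 1. *)
Definition max_eigenvalue_is_one {R : realType} {n : nat} (M : 'M[R]_n.+1) : Prop :=
  eigenvalue (cmx M) 1 /\ (forall lam : R[i], eigenvalue (cmx M) lam -> `|lam| <= 1).

(* Birkhoff's contraction theorem: for a positive matrix P, the projective
   pseudo-distance satisfies d(P x, P y) <= tau_P d(x, y).  Writing
   x = m y + a and (M - m) y = a + b, where m and M are the extreme ratios x_i/y_i,
   the log-ratios of P x and P y are log m + ln (B_i + e^t A_i) - ln (B_i + A_i)
   with t = log (M/m), A = P a, B = P b; and theta A_i B_k <= A_k B_i, so the mean
   value theorem in t bounds their spread by tau t.
   If u = P u and v = Q v then d(u, v) = d(P u, Q v) <= d(P u, P v) + d(P v, Q v)
   <= tau_P d(u, v) + 2 eps, since the entrywise ratio bounds between P and Q move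
   each (P w)_i / (Q w)_i by a factor in [e^-eps, e^eps]; the same holds for tau_Q.
   Perron's part is elementary for column-stochastic positive matrices: 1 is an
   eigenvalue with left eigenvector (1,...,1), the triangle inequality bounds every
   eigenvalue, and the entrywise modulus |u| of a fixed vector u satisfies
   |u| <= P |u| with equal sums, hence is again fixed, hence positive. *)
From HB Require Import structures.
From mathcomp Require Import all_boot all_order all_algebra.
From mathcomp Require Import complex.
From mathcomp Require Import reals sequences exp.
From mathcomp Require Import boolp classical_sets derive realfun topology normedtype.
From mathcomp Require Import ring lra.
Import Order.TTheory GRing.Theory Num.Theory numFieldNormedType.Exports.
Local Open Scope ring_scope.

Lemma frac_addr_sub_le {R : rcfType} {A1 B1 A2 B2 th : R} :
  0 <= A1 -> 0 < B1 -> 0 <= A2 -> 0 < B2 -> 0 <= th <= 1 ->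
  th * (A1 * B2) <= A2 * B1 ->
  A1 / (B1 + A1) - A2 / (B2 + A2) <= (1 - Num.sqrt th) / (1 + Num.sqrt th).
Proof.
move=> A1_ge0 B1_gt0 A2_ge0 B2_gt0 /andP[th_ge0 th_le1] hth.
set s := Num.sqrt th.
have s_ge0 : 0 <= s by rewrite sqrtr_ge0.
have s_le1 : s <= 1 by rewrite -sqrtr1 ler_sqrt.
have s2 : s ^+ 2 = th by rewrite sqr_sqrtr.
have BA1 : 0 < B1 + A1 by lra.
have BA2 : 0 < B2 + A2 by lra.
have s1_gt0 : 0 < 1 + s by lra.
rewrite -subr_ge0.
have -> : (1 - s) / (1 + s) - (A1 / (B1 + A1) - A2 / (B2 + A2)) =
    ((1 - s) * (s * A1 - B1) ^+ 2 * B2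
     + (A2 * B1 - s ^+ 2 * (A1 * B2)) * ((1 - s) * (B1 + A1) + (1 + s) * B1))
    / ((1 + s) * (B1 + A1) * (B2 + A2) * B1).
  by field; rewrite !gt_eqF.
apply: divr_ge0; last by rewrite !mulr_ge0 // ltW.
apply: addr_ge0; first by rewrite mulr_ge0 ?(mulr_ge0 _ (sqr_ge0 _)) //; lra.
by rewrite s2 mulr_ge0 ?subr_ge0 // addr_ge0 ?mulr_ge0 //; lra.
Qed.

Lemma is_derive_ln_addr_expRM {R : realType} {A B : R} (x : R) : 0 <= A -> 0 < B ->
  is_derive x 1 (fun t => ln (B + expR t * A)) ((B + expR x * A)^-1 * (expR x * A)).
Proof.
move=> A_ge0 B_gt0.
have BeA_gt0 : 0 < B + expR x * A by rewrite ltr_wpDr // mulr_ge0 // ltW ?expR_gt0.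
have d_expRM : is_derive x 1 (fun t : R => expR t * A) (expR x * A).
  have := is_deriveZ A (is_derive_expR x).
  have -> : A \*: (expR : R -> R) = (fun t : R => expR t * A).
    by apply: funext => t /=; rewrite mulrC.
  by rewrite /GRing.scale /= mulrC.
have := is_deriveD (@is_derive_cst R R^o R^o B x 1) d_expRM; rewrite add0r => d_aff.
exact: (@is_derive1_comp R (@ln R) (fun t => B + expR t * A) x _ _
  (is_derive1_ln BeA_gt0) d_aff).
Qed.

Lemma ln_affine_expR_sub_le {R : realType} {A1 B1 A2 B2 th t : R} :
  0 <= A1 -> 0 < B1 -> 0 <= A2 -> 0 < B2 -> 0 <= th <= 1 ->
  th * (A1 * B2) <= A2 * B1 -> 0 <= t ->
  ln (B1 + expR t * A1) - ln (B2 + expR t * A2) - (ln (B1 + A1) - ln (B2 + A2))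
    <= (1 - Num.sqrt th) / (1 + Num.sqrt th) * t.
Proof.
move=> A1_ge0 B1_gt0 A2_ge0 B2_gt0 th01 hth t_ge0.
set tau := (1 - Num.sqrt th) / (1 + Num.sqrt th).
pose F x := tau * x - ln (B1 + expR x * A1) + ln (B2 + expR x * A2).
pose dF x := tau - (B1 + expR x * A1)^-1 * (expR x * A1)
  + (B2 + expR x * A2)^-1 * (expR x * A2).
have dFP (x : R) : is_derive x 1 F (dF x).
  have d_lin : is_derive x 1 (fun y : R => tau * y) tau.
    by have := is_deriveZ tau (@is_derive_id R R^o x 1); rewrite /GRing.scale /= mulr1.
  exact: is_deriveD (is_deriveB d_lin (is_derive_ln_addr_expRM x A1_ge0 B1_gt0))
    (is_derive_ln_addr_expRM x A2_ge0 B2_gt0).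
have dF_ge0 (x : R) : 0 <= dF x.
  have ex_ge0 := ltW (expR_gt0 x).
  have hth_x : th * (expR x * A1 * B2) <= expR x * A2 * B1.
    by rewrite -!mulrA mulrCA ler_wpM2l.
  have := frac_addr_sub_le (mulr_ge0 ex_ge0 A1_ge0) B1_gt0
    (mulr_ge0 ex_ge0 A2_ge0) B2_gt0 th01 hth_x.
  by rewrite -/tau /dF !(mulrC (_^-1)); lra.
have F_cont : {within `[0, t], continuous F}%classic.
  apply/continuous_subspaceT => r.
  apply/differentiable_continuous/derivable1_diffP.
  exact: (@ex_derive R R^o R^o r 1 F (dF r) (dFP r)).
have [c _ FtE] := MVT_segment t_ge0 (fun x _ => dFP x) F_cont.
have : F 0 <= F t by rewrite -subr_ge0 FtE subr0 mulr_ge0.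
by rewrite /F expR0 !mul1r mulr0 sub0r; lra.
Qed.

Lemma bigmin_attained {R : realDomainType} {n : nat} (F : 'I_n.+1 -> R) :
  exists j, \big[Num.min/F ord0]_(i < n.+1) F i = F j.
Proof.
have [j _ j_min] := @arg_minP _ _ _ ord0 predT F isT.
exists j; apply: le_anti; rewrite bigmin_le /=.
by apply: le_bigmin => [|i _]; apply: j_min.
Qed.

Section ProjectiveDistance.
Context {R : realType} {n : nat}.
Implicit Types (x y z : 'cV[R]_n.+1).

Definition log_ratio x y (i : 'I_n.+1) : R := ln (x i 0 / y i 0).

Lemma log_ratio_sub_le_dproj x y i j :
  log_ratio x y i - log_ratio x y j <= dproj x y.
Proof. by apply: lerB; [exact: le_bigmax | exact: bigmin_le]. Qed.

Lemma dproj_le x y c :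
  (forall i j, log_ratio x y i - log_ratio x y j <= c) -> dproj x y <= c.
Proof.
move=> hc; rewrite /dproj lerBlDr.
have le_min i : log_ratio x y i - c <= \big[Num.min/log_ratio x y ord0]_j log_ratio x y j.
  by apply: le_bigmin => [|j _]; rewrite lerBlDl -lerBlDr hc.
by apply: bigmax_le => [|i _]; rewrite -lerBlDl le_min.
Qed.

Lemma log_ratioE x y i : positive_vec x -> positive_vec y ->
  log_ratio x y i = ln (x i 0) - ln (y i 0).
Proof. by move=> x_gt0 y_gt0; rewrite /log_ratio ln_div // posrE. Qed.

Lemma dproj_scale_le0 c z : 0 < c -> positive_vec z -> dproj (c *: z) z <= 0.
Proof.
move=> c_gt0 z_gt0; apply: dproj_le => i j.
by rewrite /log_ratio !mxE !mulfK ?gt_eqF ?z_gt0 // subrr.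
Qed.

Lemma dproj_triangle {x y z} : positive_vec x -> positive_vec y -> positive_vec z ->
  dproj x z <= dproj x y + dproj y z.
Proof.
move=> x_gt0 y_gt0 z_gt0; apply: dproj_le => i j.
have := log_ratio_sub_le_dproj x y i j; have := log_ratio_sub_le_dproj y z i j.
by rewrite !log_ratioE //; lra.
Qed.

End ProjectiveDistance.

Lemma dproj_sandwich_le {R : realType} {n : nat} {px py A B : 'cV[R]_n.+1} {lo hi th : R} :
  lo < hi -> 0 <= th <= 1 ->
  px = expR lo *: py + A -> (expR hi - expR lo) *: py = A + B ->
  (forall i, 0 <= A i 0) -> positive_vec B ->
  (forall i k, th * (A i 0 * B k 0) <= A k 0 * B i 0) ->
  dproj px py <= (1 - Num.sqrt th) / (1 + Num.sqrt th) * (hi - lo).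
Proof.
move=> lo_lt_hi th01 pxE pyE A_ge0 B_gt0 cross.
have ed_gt0 : 0 < expR hi - expR lo by rewrite subr_gt0 ltr_expR.
have ratioE i : log_ratio px py i =
    lo + (ln (B i 0 + expR (hi - lo) * A i 0) - ln (B i 0 + A i 0)).
  have BA_gt0 : 0 < B i 0 + A i 0 by rewrite ltr_wpDr.
  have BtA_gt0 : 0 < B i 0 + expR (hi - lo) * A i 0.
    by rewrite ltr_wpDr ?mulr_ge0 // ltW ?expR_gt0.
  have pyi : py i 0 = (B i 0 + A i 0) / (expR hi - expR lo).
    have := congr1 (fun w : 'cV_n.+1 => w i 0) pyE; rewrite !mxE addrC => <-.
    by rewrite mulrC mulKf // gt_eqF.
  rewrite /log_ratio.
  have -> : px i 0 / py i 0 =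
      expR lo * ((B i 0 + expR (hi - lo) * A i 0) / (B i 0 + A i 0)).
    rewrite pxE !mxE pyi expRD expRN.
    by field; rewrite !gt_eqF ?expR_gt0.
  by rewrite lnM ?posrE ?expR_gt0 ?divr_gt0 // ln_div ?posrE // expRK.
have t_ge0 : 0 <= hi - lo by rewrite subr_ge0 ltW.
apply: dproj_le => i k; rewrite !ratioE.
have := ln_affine_expR_sub_le (A_ge0 i) (B_gt0 i) (A_ge0 k) (B_gt0 k) th01 (cross i k) t_ge0.
lra.
Qed.

Section PositiveMatrix.
Context {R : realType} {n : nat} {P : 'M[R]_n.+1}.
Hypothesis P_gt0 : forall i j, 0 < P i j.

Lemma birkhoff_theta_le i j k l :
  birkhoff_theta P <= P i j * P k l / (P i l * P k j).
Proof.
apply: le_trans (bigmin_le _ i _) _; apply: le_trans (bigmin_le _ j _) _.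
by apply: le_trans (bigmin_le _ k _) _; exact: bigmin_le.
Qed.

Lemma birkhoff_theta_gt0 : 0 < birkhoff_theta P.
Proof.
apply: lt_bigmin => // i _; apply: lt_bigmin => // j _.
apply: lt_bigmin => // k _; apply: lt_bigmin => // l _.
by rewrite divr_gt0 // mulr_gt0.
Qed.

Lemma birkhoff_theta_le1 : birkhoff_theta P <= 1.
Proof. exact: bigmin_le_id. Qed.

Lemma birkhoff_tau_lt1 : birkhoff_tau P < 1.
Proof.
have s_gt0 : 0 < Num.sqrt (birkhoff_theta P) by rewrite sqrtr_gt0 birkhoff_theta_gt0.
by rewrite /birkhoff_tau ltr_pdivrMr ?addr_gt0 //; lra.
Qed.

Lemma positive_vec_mulmx_nonneg {b : 'cV[R]_n.+1} j0 :
  (forall j, 0 <= b j 0) -> 0 < b j0 0 -> positive_vec (P *m b).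
Proof.
move=> b_ge0 bj0_gt0 i; rewrite mxE (bigD1 j0) //=.
by rewrite ltr_wpDr ?mulr_gt0 // sumr_ge0 // => j _; rewrite mulr_ge0 // ltW.
Qed.

Lemma positive_vec_mulmx {x : 'cV[R]_n.+1} : positive_vec x -> positive_vec (P *m x).
Proof.
by move=> x_gt0; apply: (positive_vec_mulmx_nonneg ord0) => // j; exact: ltW.
Qed.

Lemma birkhoff_theta_cross (a b : 'cV[R]_n.+1) i k :
  (forall j, 0 <= a j 0) -> (forall j, 0 <= b j 0) ->
  birkhoff_theta P * ((P *m a) i 0 * (P *m b) k 0) <= (P *m a) k 0 * (P *m b) i 0.
Proof.
move=> a_ge0 b_ge0; rewrite !mxE !big_distrlr mulr_sumr /=.
apply: ler_sum => j _; rewrite mulr_sumr; apply: ler_sum => l _.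
have := birkhoff_theta_le k j i l; rewrite ler_pdivlMr ?mulr_gt0 // => hth.
have -> : birkhoff_theta P * (P i j * a j 0 * (P k l * b l 0)) =
  birkhoff_theta P * (P k l * P i j) * (a j 0 * b l 0) by ring.
have -> : P k j * a j 0 * (P i l * b l 0) = P k j * P i l * (a j 0 * b l 0) by ring.
by rewrite ler_wpM2r // mulr_ge0.
Qed.

Lemma dproj_mulmx_le x y : positive_vec x -> positive_vec y ->
  dproj (P *m x) (P *m y) <= birkhoff_tau P * dproj x y.
Proof.
move=> x_gt0 y_gt0.
set F := log_ratio x y.
set lo := \big[Num.min/F ord0]_(i < n.+1) F i.
set hi := \big[Num.max/F ord0]_(i < n.+1) F i.
have -> : dproj x y = hi - lo by [].
have loF j : lo <= F j by exact: bigmin_le.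
have hiF j : F j <= hi by exact: le_bigmax.
have xE j : x j 0 = expR (F j) * y j 0.
  by rewrite /F /log_ratio lnK ?posrE ?divr_gt0 // divfK // gt_eqF.
have [hi_eq_lo | hi_neq_lo] := eqVneq hi lo.
  have x_scale : x = expR lo *: y.
    apply/colP => j; have Fj : F j = lo by apply: le_anti; rewrite loF -hi_eq_lo hiF.
    by rewrite mxE xE Fj.
  rewrite hi_eq_lo subrr mulr0 x_scale -scalemxAr.
  exact: dproj_scale_le0 (expR_gt0 _) (positive_vec_mulmx y_gt0).
have lo_lt_hi : lo < hi by rewrite lt_neqAle eq_sym hi_neq_lo (le_trans (loF ord0)).
pose a := \col_j (x j 0 - expR lo * y j 0).
pose b := \col_j (expR hi * y j 0 - x j 0).
have a_ge0 j : 0 <= a j 0.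
  by rewrite mxE xE subr_ge0 ler_wpM2r ?ler_expR // ltW.
have b_ge0 j : 0 <= b j 0.
  by rewrite mxE xE subr_ge0 ler_wpM2r ?ler_expR // ltW.
have [jl jlE] := bigmin_attained F; rewrite -/lo in jlE.
have theta01 : 0 <= birkhoff_theta P <= 1.
  by rewrite birkhoff_theta_le1 ltW ?birkhoff_theta_gt0.
apply: (dproj_sandwich_le lo_lt_hi theta01 (A := P *m a) (B := P *m b)).
- by rewrite scalemxAr -mulmxDr; congr (_ *m _); apply/colP => j; rewrite !mxE addrC subrK.
- by rewrite scalemxAr -mulmxDr; congr (_ *m _); apply/colP => j; rewrite !mxE; ring.
- by move=> i; rewrite mxE sumr_ge0 // => j _; rewrite mulr_ge0 // ltW.
- apply: (positive_vec_mulmx_nonneg jl) => //.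
  by rewrite mxE xE -jlE -mulrBl mulr_gt0 // subr_gt0 ltr_expR.
- by move=> i k; exact: birkhoff_theta_cross.
Qed.

End PositiveMatrix.

Lemma dproj_mulmx_perturb {R : realType} {n : nat} (P Q : 'M[R]_n.+1) (eps : R)
    (v : 'cV[R]_n.+1) :
  (forall i j, 0 < P i j) -> (forall i j, 0 < Q i j) ->
  (forall i j, expR (- eps) <= P i j / Q i j <= expR eps) ->
  positive_vec v -> dproj (P *m v) (Q *m v) <= 2 * eps.
Proof.
move=> P_gt0 Q_gt0 hPQ v_gt0.
have Pv_gt0 := positive_vec_mulmx P_gt0 v_gt0.
have Qv_gt0 := positive_vec_mulmx Q_gt0 v_gt0.
have ratio_bound i : - eps <= log_ratio (P *m v) (Q *m v) i <= eps.
  have Pv_le : (P *m v) i 0 <= expR eps * (Q *m v) i 0.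
    rewrite !mxE mulr_sumr; apply: ler_sum => j _.
    rewrite mulrA; apply: ler_wpM2r; first exact: ltW.
    by have /andP[_ PQ_le] := hPQ i j; rewrite -ler_pdivrMr ?Q_gt0.
  have Pv_ge : expR (- eps) * (Q *m v) i 0 <= (P *m v) i 0.
    rewrite !mxE mulr_sumr; apply: ler_sum => j _.
    rewrite mulrA; apply: ler_wpM2r; first exact: ltW.
    by have /andP[PQ_ge _] := hPQ i j; rewrite -ler_pdivlMr ?Q_gt0.
  rewrite /log_ratio -[X in X <= _ <= _]expRK -[X in _ <= _ <= X]expRK.
  by rewrite !ler_ln ?posrE ?expR_gt0 ?divr_gt0 // ler_pdivlMr // ler_pdivrMr // Pv_le Pv_ge.
apply: dproj_le => i j.
by have /andP[? ?] := ratio_bound i; have /andP[? ?] := ratio_bound j; lra.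
Qed.

Lemma cmxE {R : realType} {n : nat} (M : 'M[R]_n.+1) i j : cmx M i j = (M i j)%:C%C.
Proof. by rewrite mxE. Qed.

Lemma colsum1_eigenvalue1 {F : fieldType} {n : nat} {M : 'M[F]_n.+1} :
  (forall j, \sum_i M i j = 1) -> eigenvalue M 1.
Proof.
move=> M_colsum1; apply/eigenvalueP; exists (const_mx 1).
  by apply/rowP => j; rewrite !mxE mul1r; under eq_bigr do rewrite mxE mul1r.
by apply/eqP => /rowP /(_ ord0) /eqP; rewrite !mxE oner_eq0.
Qed.

Lemma colsum1_fixed_vector {F : fieldType} {n : nat} {M : 'M[F]_n.+1} :
  (forall j, \sum_i M i j = 1) -> exists2 u : 'cV_n.+1, u != 0 & M *m u = u.
Proof.
move=> /colsum1_eigenvalue1 /eigenvalueP [v vM v_neq0].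
have : \det (M - 1%:M)^T == 0.
  by rewrite det_tr; apply/det0P; exists v; rewrite // mulmxBr vM mulmx1 scale1r subrr.
case/det0P => w w_neq0 wE.
exists w^T; first by rewrite trmx_eq0.
have := congr1 trmx wE; rewrite trmx_mul trmxK trmx0 mulmxBl mul1mx => /eqP.
by rewrite subr_eq0 => /eqP.
Qed.

Section ColumnStochastic.
Context {R : realType} {n : nat} {P : 'M[R]_n.+1}.
Hypothesis P_gt0 : forall i j, 0 < P i j.
Hypothesis P_colsum1 : forall j, \sum_i P i j = 1.

Lemma eigenvalue_cmx_norm_le1 lam : eigenvalue (cmx P) lam -> `|lam| <= 1.
Proof.
move=> /eigenvalueP [v vE v_neq0].
pose N j := ComplexField.Normc.normc (v 0 j).
have normE j : `|v 0 j| = (N j)%:C%C by [].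
have [j0 _ j0_max] := @arg_maxP _ _ _ ord0 predT N isT.
have v_le j : `|v 0 j| <= `|v 0 j0| by rewrite !normE lecR; apply: j0_max.
have vj0_gt0 : 0 < `|v 0 j0|.
  have [i vi_neq0] : exists i, v 0 i != 0.
    apply/existsP; apply: contraNT v_neq0 => /existsPn v0.
    by apply/eqP/rowP => j; rewrite mxE; apply/eqP/negbNE/v0.
  by apply: lt_le_trans (v_le i); rewrite normr_gt0.
have eig_j0 : lam * v 0 j0 = \sum_i v 0 i * (P i j0)%:C%C.
  have := congr1 (fun w : 'rV_n.+1 => w 0 j0) vE; rewrite !mxE => <-.
  by apply: eq_bigr => i _; rewrite cmxE.
rewrite -(ler_pM2r vj0_gt0) mul1r -normrM eig_j0.
apply: le_trans (ler_norm_sum _ _ _) _.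
apply: (le_trans (y := \sum_i `|v 0 j0| * (P i j0)%:C%C)).
  apply: ler_sum => i _; have Pc_ge0 : 0 <= (P i j0)%:C%C by rewrite lecR ltW.
  by rewrite normrM (ger0_norm Pc_ge0) ler_wpM2r.
by rewrite -mulr_sumr -rmorph_sum P_colsum1 mulr1.
Qed.

Lemma max_eigenvalue_is_one_colsum1 : max_eigenvalue_is_one P.
Proof.
split; last exact: eigenvalue_cmx_norm_le1.
by apply: colsum1_eigenvalue1 => j; under eq_bigr do rewrite cmxE; rewrite -rmorph_sum P_colsum1.
Qed.

Lemma sum_mulmx_colsum1 (w : 'cV[R]_n.+1) : \sum_i (P *m w) i 0 = \sum_i w i 0.
Proof.
under eq_bigr do rewrite mxE.
by rewrite exchange_big; apply: eq_bigr => j _; rewrite -mulr_suml P_colsum1 mul1r.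
Qed.

Lemma mulmx_colsum1_eq (w : 'cV[R]_n.+1) :
  (forall i, w i 0 <= (P *m w) i 0) -> P *m w = w.
Proof.
move=> w_le; have gap0 : \sum_i ((P *m w) i 0 - w i 0) = 0.
  by rewrite sumrB sum_mulmx_colsum1 subrr.
apply/colP => i; apply/eqP; rewrite -subr_eq0; apply/eqP.
by apply: (psumr_eq0P _ gap0) => // k _; rewrite subr_ge0.
Qed.

Lemma exists_positive_fixed_vector : exists u, positive_vec u /\ P *m u = u.
Proof.
have [u u_neq0 Pu] := colsum1_fixed_vector P_colsum1.
pose w := map_mx (fun a : R => `|a|) u.
have Pw : P *m w = w.
  apply: mulmx_colsum1_eq => i; rewrite !mxE -{1}Pu mxE.
  apply: le_trans (ler_norm_sum _ _ _) _; apply: ler_sum => j _.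
  by rewrite normrM ger0_norm ?mxE // ltW.
have [j0 uj0_neq0] : exists j0, u j0 0 != 0.
  apply/existsP; apply: contraNT u_neq0 => /existsPn u0.
  by apply/eqP/colP => j; rewrite mxE; apply/eqP/negbNE/u0.
exists w; split => //; rewrite -Pw.
by apply: (positive_vec_mulmx_nonneg P_gt0 j0) => [j|]; rewrite mxE ?normr_ge0 ?normr_gt0.
Qed.

End ColumnStochastic.

Lemma le_div_subr_of_le_mulD {R : realFieldType} (t c d : R) :
  t < 1 -> d <= t * d + c -> d <= c / (1 - t).
Proof. by move=> t_lt1 hd; rewrite ler_pdivlMr ?subr_gt0 //; nra. Qed.

Theorem propositionA1 (R : realType) (n : nat) (P Q : 'M[R]_n.+1) (eps : R) :
  (forall i j, 0 < P i j < 1) -> (forall i j, 0 < Q i j < 1) ->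
  (forall j, \sum_(i < n.+1) P i j = 1) -> (forall j, \sum_(i < n.+1) Q i j = 1) ->
  0 < eps ->
  (forall i j, expR (- eps) <= P i j / Q i j <= expR eps) ->
  [/\ max_eigenvalue_is_one P, max_eigenvalue_is_one Q,
      (exists u, positive_vec u /\ P *m u = u),
      (exists v, positive_vec v /\ Q *m v = v) &
      (forall u v : 'cV[R]_n.+1, positive_vec u -> P *m u = u ->
         positive_vec v -> Q *m v = v ->
         dproj u v <= 2 * eps / (1 - Num.min (birkhoff_tau P) (birkhoff_tau Q)))].
Proof.
move=> P01 Q01 P_colsum1 Q_colsum1 _ hPQ.
have P_gt0 i j : 0 < P i j by case/andP: (P01 i j).
have Q_gt0 i j : 0 < Q i j by case/andP: (Q01 i j).
split; [exact: max_eigenvalue_is_one_colsum1 | exact: max_eigenvalue_is_one_colsum1 |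
        exact: exists_positive_fixed_vector | exact: exists_positive_fixed_vector |].
move=> u v u_gt0 Pu v_gt0 Qv.
have Pu_gt0 : positive_vec (P *m u) by rewrite Pu.
have Qv_gt0 : positive_vec (Q *m v) by rewrite Qv.
have d_uv : dproj u v = dproj (P *m u) (Q *m v) by rewrite Pu Qv.
have viaP : dproj u v <= birkhoff_tau P * dproj u v + 2 * eps.
  rewrite {1}d_uv; apply: le_trans (dproj_triangle Pu_gt0 (positive_vec_mulmx P_gt0 v_gt0) Qv_gt0) _.
  by rewrite lerD ?dproj_mulmx_le ?dproj_mulmx_perturb.
have viaQ : dproj u v <= birkhoff_tau Q * dproj u v + 2 * eps.
  rewrite {1}d_uv; apply: le_trans (dproj_triangle Pu_gt0 (positive_vec_mulmx Q_gt0 u_gt0) Qv_gt0) _.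
  by rewrite addrC lerD ?dproj_mulmx_le ?dproj_mulmx_perturb.
have [->|->] : Num.min (birkhoff_tau P) (birkhoff_tau Q) = birkhoff_tau P \/
               Num.min (birkhoff_tau P) (birkhoff_tau Q) = birkhoff_tau Q.
  by rewrite /Num.min; case: ifP; [left | right].
- exact: le_div_subr_of_le_mulD (birkhoff_tau_lt1 P_gt0) viaP.
- exact: le_div_subr_of_le_mulD (birkhoff_tau_lt1 Q_gt0) viaQ.
Qed.
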